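(* Let $\mathcal{C}$ be a class of groups which is closed under taking subgroups and finite direct products, and such that every graph product of residually $\mathcal{C}$ groups is residually $\mathcal{C}$. Then every graph product of LE-$\mathcal{C}$ groups is LE-$\mathcal{C}$.
   Context: Let $G$, $C$ be groups and $K\subseteq G$ finite. A map $\varphi\colon G\to C$ is a $K$-almost-homomorphism if $\varphi(k_1k_2)=\varphi(k_1)\varphi(k_2)$ for all $k_1,k_2\in K$ and $\varphi|_K$ is injective. A group $G$ is locally embeddable into $\mathcal{C}$ (LE-$\mathcal{C}$) if for every finite $K\subseteq G$ there exist $C\in\mathcal{C}$ and a $K$-almost-homomorphism $G\to C$. A group $G$ is residually $\mathcal{C}$ if for every non-trivial $g\in G$ there exist $C\in\mathcal{C}$ and a surjective homomorphism $\varphi\colon G\twoheadrightarrow C$ with $\varphi(g)\neq e$. Given a simplicial graph $\Gamma=(V,E)$ (no loops, no multiple edges, $V$ of arbitrary cardinality) and groups $\{G_v\}_{v\in V}$, the graph product is the quotient of the free product $\ast_{v\in V}G_v$ by the relations $g_ug_v=g_vg_u$ for all $g_u\in G_u$, $g_v\in G_v$ with $\{u,v\}\in E$. *)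

From Stdlib Require Import List FunctionalExtensionality.
Import ListNotations.
Set Implicit Arguments.

Record Grp := MkGrp {
  carrier :> Type;
  gmul : carrier -> carrier -> carrier;
  gone : carrier;
  ginv : carrier -> carrier;
  gmulA : forall x y z, gmul x (gmul y z) = gmul (gmul x y) z;
  gmul1l : forall x, gmul gone x = x;
  gmul1r : forall x, gmul x gone = x;
  gmulVl : forall x, gmul (ginv x) x = gone;
  gmulVr : forall x, gmul x (ginv x) = gone
}.
Arguments gmul {g}.
Arguments gone {g}.
Arguments ginv {g}.

Definition is_hom {G H : Grp} (f : G -> H) : Prop :=
  forall x y : G, f (gmul x y) = gmul (f x) (f y).

Definition GroupClass := Grp -> Prop.

(* Closed under taking subgroups: any group embedding into a member is a
   member (classes of groups are taken up to isomorphism). *)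
Definition closed_subgroups (C : GroupClass) : Prop :=
  forall (H G : Grp) (f : H -> G),
    is_hom f -> (forall x y, f x = f y -> x = y) -> C G -> C H.

Section Prod.
Variables (I : Type) (G : I -> Grp).

Definition prod_mul (x y : forall i, G i) : forall i, G i := fun i => gmul (x i) (y i).
Definition prod_one : forall i, G i := fun i => gone.
Definition prod_inv (x : forall i, G i) : forall i, G i := fun i => ginv (x i).
Lemma prod_mulA x y z : prod_mul x (prod_mul y z) = prod_mul (prod_mul x y) z.
Proof. apply functional_extensionality_dep; intro i; apply gmulA. Qed.
Lemma prod_mul1l x : prod_mul prod_one x = x.
Proof. apply functional_extensionality_dep; intro i; apply gmul1l. Qed.
Lemma prod_mul1r x : prod_mul x prod_one = x.
Proof. apply functional_extensionality_dep; intro i; apply gmul1r. Qed.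
Lemma prod_mulVl x : prod_mul (prod_inv x) x = prod_one.
Proof. apply functional_extensionality_dep; intro i; apply gmulVl. Qed.
Lemma prod_mulVr x : prod_mul x (prod_inv x) = prod_one.
Proof. apply functional_extensionality_dep; intro i; apply gmulVr. Qed.
Definition prodGrp : Grp :=
  @MkGrp (forall i, G i) prod_mul prod_one prod_inv prod_mulA prod_mul1l prod_mul1r prod_mulVl prod_mulVr.
End Prod.

Definition finite_type (I : Type) : Prop := exists l : list I, forall i, In i l.

Definition closed_finite_products (C : GroupClass) : Prop :=
  forall (I : Type) (G : I -> Grp), finite_type I -> (forall i, C (G i)) ->
    C (prodGrp G).

Definition almost_hom {G H : Grp} (K : list G) (phi : G -> H) : Prop :=
  (forall k1 k2, In k1 K -> In k2 K -> phi (gmul k1 k2) = gmul (phi k1) (phi k2))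
  /\ (forall k1 k2, In k1 K -> In k2 K -> phi k1 = phi k2 -> k1 = k2).

Definition LE (C : GroupClass) (G : Grp) : Prop :=
  forall K : list G, exists (H : Grp) (phi : G -> H), C H /\ almost_hom K phi.

Definition residually (C : GroupClass) (G : Grp) : Prop :=
  forall g : G, g <> gone ->
    exists (H : Grp) (phi : G -> H),
      C H /\ is_hom phi /\ (forall h : H, exists x, phi x = h) /\ phi g <> gone.

Definition simplicial (V : Type) (E : V -> V -> Prop) : Prop :=
  (forall u v, E u v -> E v u) /\ (forall v, ~ E v v).

(* P (with maps iota) is the graph product of (G v) over (V, E): the quotient of
   the free product by the commutation relations, characterised by its
   universal property (presentation). *)
Definition is_graph_product (V : Type) (E : V -> V -> Prop) (G : V -> Grp)
    (P : Grp) (iota : forall v, G v -> P) : Prop :=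
  (forall v, is_hom (iota v)) /\
  (forall u v (x : G u) (y : G v), E u v ->
      gmul (iota u x) (iota v y) = gmul (iota v y) (iota u x)) /\
  (forall (H : Grp) (f : forall v, G v -> H),
     (forall v, is_hom (f v)) ->
     (forall u v (x : G u) (y : G v), E u v ->
        gmul (f u x) (f v y) = gmul (f v y) (f u x)) ->
     (exists h : P -> H, is_hom h /\ forall v x, h (iota v x) = f v x) /\
     (forall h1 h2 : P -> H, is_hom h1 -> is_hom h2 ->
        (forall v x, h1 (iota v x) = f v x) ->
        (forall v x, h2 (iota v x) = f v x) ->
        forall p, h1 p = h2 p)).

Definition graph_products_preserve (Pr : GroupClass) : Prop :=
  forall (V : Type) (E : V -> V -> Prop) (G : V -> Grp) (P : Grp)
         (iota : forall v, G v -> P),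
    simplicial E -> @is_graph_product V E G P iota -> (forall v, Pr (G v)) -> Pr P.

(* Let K be a finite subset of a graph product P of LE-C groups G_v.  Write the
   elements of K and their pairwise products as words in the vertex groups and
   map every letter through an almost-homomorphism G_v -> C_v, C_v in C, that is
   faithful and multiplicative on a large ball around the finitely many letters
   involved.  A word is trivial in a graph product iff it reduces to the empty
   word by deleting trivial letters, merging adjacent letters of the same vertex
   group and swapping adjacent letters of adjacent vertices; for short words
   these reductions never leave the ball, so they are simulated in both
   directions by the letter-wise map.  This gives a K-almost-homomorphism from P
   into the graph product Q of the C_v.  Q is residually C, and finitely many
   homomorphisms onto members of C, bundled into their finite product, separate
   the finitely many elements of Q that matter. *)

From Stdlib Require Import List Relations ClassicalEpsilon ProofIrrelevance
  FunctionalExtensionality PropExtensionality Lia PeanoNat Classical.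
Import ListNotations.
Set Implicit Arguments.

Local Notation dec := excluded_middle_informative.

Arguments gmulA {g}. Arguments gmul1l {g}. Arguments gmul1r {g}.
Arguments gmulVl {g}. Arguments gmulVr {g}.

Section GroupFacts.
Variable G : Grp.

Lemma gmul_eq1_ginv (x y : G) : gmul x y = gone -> x = ginv y.
Proof.
  intro h. rewrite <- (gmul1r x), <- (gmulVr y), gmulA, h. apply gmul1l.
Qed.

Lemma ginv_gmul (x y : G) : ginv (gmul x y) = gmul (ginv y) (ginv x).
Proof.
  symmetry. apply gmul_eq1_ginv.
  rewrite <- gmulA, (gmulA (ginv x)), gmulVl, gmul1l. apply gmulVl.
Qed.

Lemma ginv_one : ginv (@gone G) = gone.
Proof. symmetry. apply gmul_eq1_ginv, gmul1l. Qed.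

Lemma ginvK (x : G) : ginv (ginv x) = x.
Proof. symmetry. apply gmul_eq1_ginv, gmulVr. Qed.

Lemma gmul_cancel_l (a x y : G) : gmul a x = gmul a y -> x = y.
Proof.
  intro h. rewrite <- (gmul1l x), <- (gmul1l y), <- (gmulVl a), <- !gmulA, h.
  reflexivity.
Qed.

Lemma gmulV_eq1 (x y : G) : gmul (ginv x) y = gone -> x = y.
Proof. intro h. apply (gmul_cancel_l (ginv x)). rewrite h. apply gmulVl. Qed.

End GroupFacts.

Arguments gmul_eq1_ginv {G}. Arguments ginv_gmul {G}. Arguments ginv_one {G}.
Arguments ginvK {G}. Arguments gmul_cancel_l {G}. Arguments gmulV_eq1 {G}.

Lemma hom_one (G H : Grp) (f : G -> H) : is_hom f -> f gone = gone.
Proof.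
  intro hf. apply (gmul_cancel_l (f gone)). rewrite <- hf, gmul1l, gmul1r.
  reflexivity.
Qed.

Lemma hom_inv (G H : Grp) (f : G -> H) : is_hom f -> forall x, f (ginv x) = ginv (f x).
Proof. intros hf x. apply gmul_eq1_ginv. rewrite <- hf, gmulVl. apply hom_one, hf. Qed.

Lemma sig_ext (A : Type) (P : A -> Prop) (a b : {x | P x}) :
  proj1_sig a = proj1_sig b -> a = b.
Proof. destruct a, b; simpl; intro; subst; f_equal; apply proof_irrelevance. Qed.

(** * Words in the vertex groups *)

Section Words.
Variables (V : Type) (E : V -> V -> Prop) (G : V -> Grp).

Definition letter := {v : V & carrier (G v)}.
Definition word := list letter.
Local Notation L v x := (existT (fun v0 => carrier (G v0)) v x).

Definition eval (H : Grp) (f : forall v, G v -> H) (w : word) : H :=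
  fold_right (fun a acc => gmul (f (projT1 a) (projT2 a)) acc) gone w.

Definition linv (a : letter) : letter := L (projT1 a) (ginv (projT2 a)).
Definition winv (w : word) : word := rev (map linv w).

Definition commuting (H : Grp) (f : forall v, G v -> H) : Prop :=
  forall u v (x : G u) (y : G v), E u v -> gmul (f u x) (f v y) = gmul (f v y) (f u x).

Lemma eval_app H f (w1 w2 : word) :
  eval H f (w1 ++ w2) = gmul (eval H f w1) (eval H f w2).
Proof.
  induction w1; simpl; [rewrite gmul1l | rewrite IHw1, gmulA]; reflexivity.
Qed.

Lemma eval_winv H f (hf : forall v, is_hom (f v)) (w : word) :
  eval H f (winv w) = ginv (eval H f w).
Proof.
  induction w as [|[v x] w IH]; unfold winv in *; simpl.
  - symmetry; apply ginv_one.
  - rewrite eval_app, IH, ginv_gmul. simpl. rewrite gmul1r, (hom_inv (hf v)).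
    reflexivity.
Qed.

Lemma winvK (w : word) : winv (winv w) = w.
Proof.
  unfold winv. rewrite map_rev, rev_involutive, map_map.
  rewrite <- (map_id w) at 2. apply map_ext. intros [v x]; unfold linv; simpl.
  rewrite ginvK; reflexivity.
Qed.

Lemma in_winv (w : word) a : In a w -> In (linv a) (winv w).
Proof. intro h. unfold winv. apply in_rev. rewrite rev_involutive. apply in_map, h. Qed.

Lemma length_winv (w : word) : length (winv w) = length w.
Proof. unfold winv. rewrite length_rev, length_map; reflexivity. Qed.

Inductive step : word -> word -> Prop :=
| step_del v l : step (L v gone :: l) l
| step_merge v (x y : G v) l : step (L v x :: L v y :: l) (L v (gmul x y) :: l)
| step_swap u v (x : G u) (y : G v) l : E u v ->
    step (L u x :: L v y :: l) (L v y :: L u x :: l)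
| step_cons a l l' : step l l' -> step (a :: l) (a :: l').

Definition red := clos_refl_trans word step.
Definition conv := clos_refl_sym_trans word step.

Lemma red_cons a l l' : red l l' -> red (a :: l) (a :: l').
Proof.
  induction 1; [apply rt_step, step_cons | apply rt_refl | eapply rt_trans]; eauto.
Qed.

Lemma step_app_r l l' t : step l l' -> step (l ++ t) (l' ++ t).
Proof. induction 1; simpl; constructor; auto. Qed.

Lemma step_app_l t l l' : step l l' -> step (t ++ l) (t ++ l').
Proof. induction t; simpl; auto using step_cons. Qed.

Lemma conv_app a b c d : conv a b -> conv c d -> conv (a ++ c) (b ++ d).
Proof.
  intros hab hcd. apply rst_trans with (b ++ c).
  - induction hab; eauto using rst_step, step_app_r, rst_refl, rst_sym, rst_trans.
  - induction hcd; eauto using rst_step, step_app_l, rst_refl, rst_sym, rst_trans.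
Qed.

Lemma conv_winv_r (w : word) : conv (w ++ winv w) [].
Proof.
  induction w as [|[v x] w IH]; simpl; [apply rst_refl|].
  unfold winv; simpl; fold (winv w). rewrite app_assoc.
  apply rst_trans with [L v x; L v (ginv x)].
  - apply (conv_app (a := [L v x]) (b := [L v x])); [apply rst_refl|].
    apply (conv_app IH), rst_refl.
  - apply rst_trans with [L v (gmul x (ginv x))]; [apply rst_step, step_merge|].
    rewrite gmulVr. apply rst_step, step_del.
Qed.

Lemma conv_winv_l (w : word) : conv (winv w ++ w) [].
Proof. rewrite <- (winvK w) at 2. apply conv_winv_r. Qed.

Lemma eval_step H f (hf : forall v, is_hom (f v)) (hc : commuting H f) w w' :
  step w w' -> eval H f w = eval H f w'.
Proof.
  induction 1; simpl.
  - rewrite (hom_one (hf v)). apply gmul1l.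
  - rewrite gmulA, <- hf. reflexivity.
  - rewrite !gmulA, hc; auto.
  - rewrite IHstep; reflexivity.
Qed.

Lemma eval_conv H f (hf : forall v, is_hom (f v)) (hc : commuting H f) w w' :
  conv w w' -> eval H f w = eval H f w'.
Proof. induction 1; eauto using eval_step, eq_trans, eq_sym. Qed.

Lemma eval_red H f (hf : forall v, is_hom (f v)) (hc : commuting H f) w w' :
  red w w' -> eval H f w = eval H f w'.
Proof. intro h. apply (eval_conv hf hc), clos_rt_clos_rst, h. Qed.

End Words.

Arguments step {V} E {G}.
Arguments red {V} E {G}.
Arguments conv {V} E {G}.
Arguments eval {V G H}.
Arguments winv {V G}.
Arguments linv {V G}.
Arguments commuting {V} E {G H}.

Section Generation.
Variables (V : Type) (E : V -> V -> Prop) (G : V -> Grp) (P : Grp)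
  (iota : forall v, G v -> P).
Hypothesis hP : is_graph_product E G P iota.

Let iota_hom : forall v, is_hom (iota v) := proj1 hP.
Let iota_comm : commuting E iota := proj1 (proj2 hP).

Definition word_image := {p : P | exists w : word G, eval iota w = p}.

Definition word_image_mul (a b : word_image) : word_image.
Proof.
  exists (gmul (proj1_sig a) (proj1_sig b)).
  destruct a as [a [w1 e1]], b as [b [w2 e2]]; simpl.
  exists (w1 ++ w2). rewrite eval_app; congruence.
Defined.

Definition word_image_inv (a : word_image) : word_image.
Proof.
  exists (ginv (proj1_sig a)). destruct a as [a [w e]]; simpl.
  exists (winv w). rewrite eval_winv by exact iota_hom. congruence.
Defined.

Definition word_image_grp : Grp.
Proof.
  refine (@MkGrp word_image word_image_mul (exist _ gone (ex_intro _ [] eq_refl))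
    word_image_inv _ _ _ _ _); intros; apply sig_ext; simpl;
  auto using gmulA, gmul1l, gmul1r, gmulVl, gmulVr.
Defined.

(* The inclusion of [word_image_grp] into [P] has a right inverse, by the
   universal property of [P] and the uniqueness of its extensions. *)
Lemma graph_product_generated (p : P) : exists w, eval iota w = p.
Proof.
  pose proof (proj2 (proj2 hP)) as U.
  set (f := fun v (x : G v) => (exist _ (iota v x)
    (ex_intro _ [existT _ v x] (gmul1r _)) : word_image_grp)).
  assert (hf : forall v, is_hom (f v)).
  { intros v x y; apply sig_ext, iota_hom. }
  assert (hcf : commuting E f).
  { intros u v x y huv; apply sig_ext, iota_comm, huv. }
  destruct (U word_image_grp f hf hcf) as [[h [h_hom h_iota]] _].
  assert (e : proj1_sig (h p) = p).
  { apply (proj2 (U P iota iota_hom iota_comm) (fun q => proj1_sig (h q)) (fun q => q)).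
    - intros x y. rewrite h_hom. reflexivity.
    - intros x y; reflexivity.
    - intros v x; rewrite h_iota; reflexivity.
    - reflexivity. }
  rewrite <- e. exact (proj2_sig (h p)).
Qed.

End Generation.

Section Construction.
Variables (V : Type) (E : V -> V -> Prop) (G : V -> Grp).
Local Notation L v x := (existT (fun v0 => carrier (G v0)) v x).

(* Words modulo [conv E]: a class is represented by its predicate
   [conv E w], and an arbitrary representative is chosen for the operations. *)
Definition word_class := {S : word G -> Prop | exists w, S = conv E w}.
Definition cls (w : word G) : word_class := exist _ (conv E w) (ex_intro _ w eq_refl).
Definition rep (S : word_class) : word G :=
  proj1_sig (constructive_indefinite_description _ (proj2_sig S)).

Lemma cls_eq w1 w2 : conv E w1 w2 -> cls w1 = cls w2.
Proof.
  intro h. apply sig_ext; simpl. extensionality x. apply propositional_extensionality.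
  split; intro; eapply rst_trans; eauto using rst_sym.
Qed.

Lemma cls_rep S : cls (rep S) = S.
Proof.
  apply sig_ext; simpl. unfold rep.
  destruct (constructive_indefinite_description _ _); auto.
Qed.

Lemma rep_cls w : conv E (rep (cls w)) w.
Proof.
  unfold rep. destruct (constructive_indefinite_description _ _) as [w' e]; simpl in *.
  rewrite <- e. apply rst_refl.
Qed.

Lemma word_class_ind (Q : word_class -> Prop) : (forall w, Q (cls w)) -> forall S, Q S.
Proof. intros h S. rewrite <- (cls_rep S). apply h. Qed.

Definition wc_mul (S T : word_class) : word_class := cls (rep S ++ rep T).

Lemma wc_mul_cls a b : wc_mul (cls a) (cls b) = cls (a ++ b).
Proof. apply cls_eq, conv_app; apply rep_cls. Qed.

Definition graph_product_grp : Grp.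
Proof.
  refine (@MkGrp word_class wc_mul (cls []) (fun S => cls (winv (rep S))) _ _ _ _ _).
  - intros x y z. revert x; apply word_class_ind; intro a.
    revert y; apply word_class_ind; intro b. revert z; apply word_class_ind; intro c.
    rewrite !wc_mul_cls, app_assoc; reflexivity.
  - apply word_class_ind; intro a. rewrite wc_mul_cls; reflexivity.
  - apply word_class_ind; intro a. rewrite wc_mul_cls, app_nil_r; reflexivity.
  - intro S. apply cls_eq. eapply rst_trans; [apply conv_app; [apply rep_cls|apply rst_refl]|].
    apply conv_winv_l.
  - intro S. apply cls_eq. eapply rst_trans; [apply conv_app; [apply rst_refl|apply rep_cls]|].
    apply conv_winv_r.
Defined.

Definition graph_product_inj (v : V) (x : G v) : graph_product_grp := cls [L v x].

Lemma graph_product_grp_spec : is_graph_product E G graph_product_grp graph_product_inj.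
Proof.
  split; [|split].
  - intros v x y. simpl. unfold graph_product_inj. rewrite wc_mul_cls.
    apply cls_eq, rst_sym, rst_step, step_merge.
  - intros u v x y huv. simpl. unfold graph_product_inj. rewrite !wc_mul_cls.
    apply cls_eq, rst_step, step_swap, huv.
  - intros H f hf hc. split.
    + exists (fun S => eval f (rep S)). split.
      * intros S T. simpl. unfold wc_mul. rewrite <- eval_app.
        apply (eval_conv hf hc), rep_cls.
      * intros v x. unfold graph_product_inj. rewrite (eval_conv hf hc (rep_cls _)).
        apply gmul1r.
    + intros h1 h2 hh1 hh2 e1 e2. apply word_class_ind. intro w.
      induction w as [|[v x] w IH].
      * change (cls []) with (@gone graph_product_grp). rewrite !hom_one; auto.
      * change (cls (L v x :: w)) with (cls ([L v x] ++ w)).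
        rewrite <- wc_mul_cls. fold (graph_product_inj v x).
        change (wc_mul ?a ?b) with (@gmul graph_product_grp a b).
        rewrite hh1, hh2, e1, e2, IH. reflexivity.
Qed.

End Construction.

(** * The word problem *)

Section Symmetric.
Variable T : Type.

Definition bijection :=
  {p : (T -> T) * (T -> T) | (forall x, snd p (fst p x) = x) /\ (forall x, fst p (snd p x) = x)}.

Lemma bijection_ext (p q : bijection) :
  (forall x, fst (proj1_sig p) x = fst (proj1_sig q) x) -> p = q.
Proof.
  destruct p as [[p1 p2] [hp1 hp2]], q as [[q1 q2] [hq1 hq2]]; simpl in *. intro h.
  assert (e1 : p1 = q1) by (extensionality x; auto). subst q1.
  assert (e2 : p2 = q2).
  { extensionality x. rewrite <- (hq2 x) at 1. rewrite hp1. reflexivity. }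
  subst q2. f_equal. apply proof_irrelevance.
Qed.

Definition bij_comp (p q : bijection) : bijection.
Proof.
  exists (fun x => fst (proj1_sig p) (fst (proj1_sig q) x),
          fun x => snd (proj1_sig q) (snd (proj1_sig p) x)).
  destruct p as [[p1 p2] [hp1 hp2]], q as [[q1 q2] [hq1 hq2]]; simpl in *.
  split; intro x; [rewrite hp1, hq1 | rewrite hq2, hp2]; reflexivity.
Defined.

Definition bij_id : bijection :=
  exist _ (fun x => x, fun x => x) (conj (fun _ => eq_refl) (fun _ => eq_refl)).

Definition bij_inv (p : bijection) : bijection.
Proof.
  exists (snd (proj1_sig p), fst (proj1_sig p)). destruct p as [pp [h1 h2]]; simpl; auto.
Defined.

Definition sym_grp : Grp.
Proof.
  refine (@MkGrp bijection bij_comp bij_id bij_inv _ _ _ _ _); intros;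
    apply bijection_ext; intros; simpl; auto;
    destruct x as [pp [h1 h2]]; simpl; auto.
Defined.

End Symmetric.

Section Heaps.
Variables (V : Type) (E : V -> V -> Prop) (G : V -> Grp).
Hypothesis hE : simplicial E.
Let Esym : forall u v, E u v -> E v u := proj1 hE.
Let Eirr : forall v, ~ E v v := proj2 hE.
Local Notation L v x := (existT (fun v0 => carrier (G v0)) v x).

(* A heap of letters is stored as one stack per vertex.  Pushing a letter of
   [G v] puts it on the stack of [v], leaves the stacks of the neighbours of [v]
   untouched (the letter commutes with them) and blocks every other stack with
   [None].  So a new letter of [G v] may be merged into the top of the stack of
   [v] exactly when it commutes with all the letters pushed after that top. *)
Definition stacks := forall w : V, list (option (carrier (G w))).

Definition push (v : V) (x : G v) (s : stacks) : stacks := fun w =>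
  match dec (v = w) with
  | left e => Some (eq_rect v (fun z => carrier (G z)) x w e) :: s w
  | right _ => if dec (E v w) then s w else None :: s w
  end.

Definition pop (v : V) (s : stacks) : stacks := fun w =>
  if dec (v = w) then tl (s w) else if dec (E v w) then s w else tl (s w).

Lemma push_self v x s : push v x s v = Some x :: s v.
Proof.
  unfold push. destruct (dec (v = v)) as [e|n]; [|congruence].
  rewrite (proof_irrelevance _ e eq_refl). reflexivity.
Qed.

Lemma push_adj v x s w : E v w -> push v x s w = s w.
Proof.
  intro h. unfold push. destruct (dec (v = w)) as [e|n].
  - subst. exfalso; eapply Eirr; eauto.
  - destruct (dec (E v w)); tauto.
Qed.

Lemma push_nadj v x s w : v <> w -> ~ E v w -> push v x s w = None :: s w.
Proof.
  intros h1 h2. unfold push. destruct (dec (v = w)); [tauto|].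
  destruct (dec (E v w)); tauto.
Qed.

Lemma push_cases v x s w : push v x s w = s w \/ exists t, push v x s w = t :: s w.
Proof. unfold push. destruct (dec (v = w)); eauto. destruct (dec (E v w)); eauto. Qed.

Lemma pop_push v x s : pop v (push v x s) = s.
Proof.
  extensionality w. unfold pop, push.
  destruct (dec (v = w)); simpl; [|destruct (dec (E v w))]; reflexivity.
Qed.

Lemma push_comm u v (x : G u) (y : G v) s : E u v ->
  push u x (push v y s) = push v y (push u x s).
Proof.
  intro huv. assert (u <> v) by (intro; subst; eapply Eirr; eauto).
  extensionality w. destruct (dec (u = w)) as [<-|n1].
  { rewrite push_self, !push_adj, push_self by auto. reflexivity. }
  destruct (dec (v = w)) as [<-|n2].
  { rewrite push_adj, !push_self, push_adj by auto. reflexivity. }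
  destruct (classic (E u w)) as [a1|a1]; destruct (classic (E v w)) as [a2|a2].
  - rewrite !push_adj; auto.
  - rewrite (push_adj _ _ a1), !(push_nadj _ _ n2 a2), (push_adj _ _ a1). reflexivity.
  - rewrite (push_adj _ _ a2), !(push_nadj _ _ n1 a1), (push_adj _ _ a2). reflexivity.
  - rewrite !push_nadj; auto.
Qed.

Definition empty_stacks : stacks := fun _ => [].

Definition heap_of (s : word G) : stacks :=
  fold_right (fun a t => push (projT1 a) (projT2 a) t) empty_stacks s.

Lemma heap_of_nil s : heap_of s = empty_stacks -> s = [].
Proof.
  destruct s as [|[v x] s]; auto. simpl. intro h.
  assert (h' := f_equal (fun t => t v) h). simpl in h'. rewrite push_self in h'.
  discriminate.
Qed.

Lemma heap_of_top s v x rest : heap_of s v = Some x :: rest ->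
  exists s0, red E s (L v x :: s0) /\ heap_of s = push v x (heap_of s0).
Proof.
  induction s as [|[u y] s IH]; simpl; intro h; [discriminate|].
  destruct (dec (u = v)) as [<-|n].
  { rewrite push_self in h. injection h as ->. exists s; split; [apply rt_refl | reflexivity]. }
  destruct (classic (E u v)) as [a|a]; [|rewrite push_nadj in h; auto; discriminate].
  rewrite push_adj in h by exact a. destruct (IH h) as [s1 [r1 e1]].
  exists (L u y :: s1). split.
  - eapply rt_trans; [apply red_cons, r1 | apply rt_step, step_swap, a].
  - simpl. rewrite e1. apply push_comm, a.
Qed.

Definition act (v : V) (x : G v) (s : stacks) : stacks :=
  if dec (x = gone) then s else
  match s v with
  | Some k :: _ => if dec (gmul x k = gone) then pop v s else push v (gmul x k) (pop v s)
  | _ => push v x s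
  end.

Lemma act_one v s : act v gone s = s.
Proof. unfold act. destruct (dec (@gone (G v) = gone)); tauto. Qed.

Lemma act_push v x k t : act v x (push v k t) =
  if dec (x = gone) then push v k t
  else if dec (gmul x k = gone) then t else push v (gmul x k) t.
Proof.
  unfold act. destruct (dec (x = gone)); auto. rewrite push_self.
  destruct (dec (gmul x k = gone)); rewrite pop_push; reflexivity.
Qed.

Lemma act_heap_of v x s : exists s', act v x (heap_of s) = heap_of s' /\ red E (L v x :: s) s'.
Proof.
  destruct (dec (x = gone)) as [->|nx].
  { exists s. split; [apply act_one | apply rt_step, step_del]. }
  destruct (heap_of s v) as [|[k|] rest] eqn:eh.
  2: destruct (heap_of_top _ _ eh) as [s0 [r0 e0]].
  all: try solve [exists (L v x :: s); split; [|apply rt_refl];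
    unfold act; destruct (dec (x = gone)); [tauto|]; rewrite eh; reflexivity].
  rewrite e0, act_push. destruct (dec (x = gone)); [tauto|].
  assert (r1 : red E (L v x :: s) (L v (gmul x k) :: s0)).
  { eapply rt_trans; [apply red_cons, r0 | apply rt_step, step_merge]. }
  destruct (dec (gmul x k = gone)) as [e|n0].
  - exists s0. split; auto. eapply rt_trans; [apply r1|]. rewrite e. apply rt_step, step_del.
  - exists (L v (gmul x k) :: s0). split; auto.
Qed.

Definition act_word (w : word G) (s : stacks) : stacks :=
  fold_right (fun a t => act (projT1 a) (projT2 a) t) s w.

Lemma act_word_empty w : exists s, act_word w empty_stacks = heap_of s /\ red E w s.
Proof.
  induction w as [|[v x] w [s1 [e1 r1]]]; simpl.
  - exists []; split; [reflexivity | apply rt_refl].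
  - rewrite e1. destruct (act_heap_of v x s1) as [s' [e' r']]. exists s'; split; auto.
    eapply rt_trans; [apply red_cons, r1 | exact r'].
Qed.

(* [act] is a group action only on [reduced] stacks. *)
Definition no_consecutive {A} (l : list (option A)) :=
  forall a b l1 l2, l <> l1 ++ Some a :: Some b :: l2.

Definition reduced (s : stacks) :=
  (exists w, s = heap_of w) /\ (forall v, no_consecutive (s v)) /\
  (forall v a, In (Some a) (s v) -> a <> gone).

Lemma no_consecutive_tail {A} (t : option A) l : no_consecutive (t :: l) -> no_consecutive l.
Proof. intros h a b l1 l2 e. apply (h a b (t :: l1) l2). rewrite e; reflexivity. Qed.

Lemma no_consecutive_None {A} (l : list (option A)) :
  no_consecutive l -> no_consecutive (None :: l).
Proof.
  intros h a b [|c l1] l2 e; injection e; intros; [discriminate | eapply h; eauto].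
Qed.

Lemma no_consecutive_Some {A} (c : A) (l : list (option A)) :
  no_consecutive l -> (forall k rest, l <> Some k :: rest) -> no_consecutive (Some c :: l).
Proof.
  intros h h' a b [|d l1] l2 e; injection e; intros; subst; [eapply h' | eapply h]; eauto.
Qed.

Lemma reduced_empty : reduced empty_stacks.
Proof.
  split; [|split]; [exists []; reflexivity | | intros v a []].
  intros v a b [|] l2 e; discriminate.
Qed.

Definition top_free (v : V) (s : stacks) := forall k rest, s v <> Some k :: rest.

Definition place (v : V) (c : G v) (s : stacks) : stacks :=
  if dec (c = gone) then s else push v c s.

Lemma act_place v x c s : top_free v s -> act v x (place v c s) = place v (gmul x c) s.
Proof.
  intro ht. unfold place. destruct (dec (c = gone)) as [->|nc].
  - rewrite gmul1r. unfold act. destruct (dec (x = gone)); auto.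
    destruct (s v) as [|[k|] rest] eqn:es; auto. exfalso; eapply ht; eauto.
  - rewrite act_push. destruct (dec (x = gone)) as [->|nx].
    + rewrite gmul1l. destruct (dec (c = gone)); tauto.
    + destruct (dec (gmul x c = gone)); reflexivity.
Qed.

Lemma place_comm u v d c s : E u v -> place u d (place v c s) = place v c (place u d s).
Proof.
  intro h. unfold place.
  destruct (dec (d = gone)); destruct (dec (c = gone)); auto using push_comm.
Qed.

Lemma top_free_place u v d s : E u v -> top_free v s -> top_free v (place u d s).
Proof.
  intros h ht k rest. unfold place. destruct (dec (d = gone)); auto.
  rewrite push_adj; auto.
Qed.

Lemma reduced_place v c s : reduced s -> top_free v s -> reduced (place v c s).
Proof.
  intros [[w ->] [h2 h3]] ht. unfold place. destruct (dec (c = gone)) as [ec|nc].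
  { split; [|split]; eauto. }
  split; [|split].
  - exists (L v c :: w). reflexivity.
  - intro u. unfold push. destruct (dec (v = u)) as [<-|n]; simpl.
    + apply no_consecutive_Some; auto.
    + destruct (dec (E v u)); auto using no_consecutive_None.
  - intros u a. unfold push. destruct (dec (v = u)) as [<-|n]; simpl.
    + intros [ea|ia]; [injection ea as <-; exact nc | eapply h3; eauto].
    + destruct (dec (E v u)); [eapply h3; eauto|].
      intros [ea|ia]; [discriminate | eapply h3; eauto].
Qed.

Lemma reduced_decomp v s : reduced s -> exists c t, reduced t /\ top_free v t /\ s = place v c t.
Proof.
  intros hs. pose proof hs as [[w hw] [h2 h3]].
  assert (trivial_top : top_free v s -> exists c t, reduced t /\ top_free v t /\ s = place v c t).
  { intro ht. exists gone, s. unfold place. destruct (dec (@gone (G v) = gone)); tauto. }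
  destruct (s v) as [|[k|] rest] eqn:es; try (apply trivial_top; intros k r; congruence).
  rewrite hw in es. destruct (heap_of_top _ _ es) as [w0 [_ e0]]. rewrite <- hw in e0, es.
  assert (kn : k <> gone) by (apply (h3 v); rewrite es; left; reflexivity).
  assert (e1 : heap_of w0 v = rest) by (rewrite e0, push_self in es; injection es; auto).
  exists k, (heap_of w0). split; [|split].
  - split; [eauto|split].
    + intro u. destruct (push_cases v k (heap_of w0) u) as [e|[t e]]; rewrite <- e0 in e.
      * rewrite <- e; auto.
      * apply no_consecutive_tail with t. rewrite <- e; auto.
    + intros u a ia. apply (h3 u). destruct (push_cases v k (heap_of w0) u) as [e|[t e]];
        rewrite <- e0 in e; rewrite e; simpl; auto.
  - intros k' r' e. apply (h2 v k k' [] r'). rewrite es, <- e1, e. reflexivity.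
  - rewrite e0. unfold place. destruct (dec (k = gone)); tauto.
Qed.

Lemma reduced_act v x s : reduced s -> reduced (act v x s).
Proof.
  intro hs. destruct (reduced_decomp v hs) as [c [t [ht [tf ->]]]].
  rewrite act_place; auto using reduced_place.
Qed.

Lemma act_mul v x y s : reduced s -> act v (gmul x y) s = act v x (act v y s).
Proof.
  intro hs. destruct (reduced_decomp v hs) as [c [t [ht [tf ->]]]].
  rewrite !act_place, gmulA; auto.
Qed.

Lemma act_comm u v (x : G u) (y : G v) s : E u v -> reduced s ->
  act u x (act v y s) = act v y (act u x s).
Proof.
  intros huv hs. destruct (reduced_decomp v hs) as [c [t [ht [tfv ->]]]].
  destruct (reduced_decomp u ht) as [d [z [hz [tfu ->]]]].
  assert (tfvz : top_free v z).
  { intros k r ez. apply (tfv k r). unfold place. destruct (dec (d = gone)); auto.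
    rewrite push_adj; auto. }
  rewrite (act_place y c tfv), <- (place_comm d (gmul y c) z huv).
  rewrite (act_place x d (top_free_place (gmul y c) (Esym huv) tfu)).
  rewrite <- (place_comm d c z huv), (act_place x d (top_free_place c (Esym huv) tfu)).
  rewrite (place_comm (gmul x d) c z huv), (act_place y c (top_free_place (gmul x d) huv tfvz)).
  apply place_comm, huv.
Qed.

Definition reduced_heap := {s : stacks | reduced s}.

Definition act_reduced v (x : G v) (s : reduced_heap) : reduced_heap :=
  exist _ (act v x (proj1_sig s)) (reduced_act v x (proj2_sig s)).

Definition heap_action (v : V) (x : G v) : sym_grp reduced_heap.
Proof.
  exists (act_reduced v x, act_reduced v (ginv x)).
  split; intro s; apply sig_ext; simpl; rewrite <- act_mul by exact (proj2_sig s).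
  - rewrite gmulVl; apply act_one.
  - rewrite gmulVr; apply act_one.
Defined.

Lemma heap_action_hom v : is_hom (heap_action v).
Proof.
  intros x y. apply bijection_ext. intro s. apply sig_ext, act_mul, (proj2_sig s).
Qed.

Lemma heap_action_comm : commuting E heap_action.
Proof.
  intros u v x y huv. apply bijection_ext. intro s.
  apply sig_ext, act_comm; [exact huv | exact (proj2_sig s)].
Qed.

Theorem graph_product_word_problem (P : Grp) (iota : forall v, G v -> P) :
  is_graph_product E G P iota -> forall w, eval iota w = gone -> red E w [].
Proof.
  intros [_ [_ U] ] w ew.
  destruct (U _ heap_action heap_action_hom heap_action_comm) as [[h [h_hom h_iota]] _].
  assert (h_eval : forall w s, proj1_sig (fst (proj1_sig (h (eval iota w))) s)
                              = act_word w (proj1_sig s)).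
  { induction w0 as [|[v x] w0 IH]; intro s; simpl.
    - rewrite (hom_one h_hom). reflexivity.
    - rewrite h_hom, h_iota. simpl. rewrite IH. reflexivity. }
  specialize (h_eval w (exist _ empty_stacks reduced_empty)).
  rewrite ew, (hom_one h_hom) in h_eval. simpl in h_eval.
  destruct (act_word_empty w) as [s [e r]]. rewrite <- h_eval in e.
  symmetry in e. apply heap_of_nil in e. subst; exact r.
Qed.

End Heaps.

(** * Balls and the simulation of reductions *)

Fixpoint ball (H : Grp) (A : list H) (m : nat) : list H :=
  match m with
  | 0 => [gone]
  | S m => ball H A m ++ flat_map (fun a => map (gmul a) (ball H A m)) A
  end.
Arguments ball {H}.

Lemma ball_mono {H : Grp} (A : list H) m m' : m <= m' -> incl (ball A m) (ball A m').
Proof.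
  induction 1; [apply incl_refl|]. eapply incl_tran; [eassumption|].
  intros x h; simpl; apply in_or_app; auto.
Qed.

Lemma ball_one {H : Grp} (A : list H) m : In gone (ball A m).
Proof. apply (ball_mono A (Nat.le_0_l m)); simpl; auto. Qed.

Lemma ball_gen {H : Grp} (A : list H) a : In a A -> In a (ball A 1).
Proof.
  intro h. apply in_or_app; right. apply in_flat_map. exists a; split; auto.
  left. apply gmul1r.
Qed.

Lemma ball_mul {H : Grp} (A : list H) m m' x y :
  In x (ball A m) -> In y (ball A m') -> In (gmul x y) (ball A (m + m')).
Proof.
  revert x. induction m as [|m IH]; intros x hx hy; simpl in *.
  - destruct hx as [<-|[]]. rewrite gmul1l; exact hy.
  - apply in_app_or in hx as [hx|hx].
    + apply in_or_app; left. apply IH; auto.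
    + apply in_flat_map in hx as [a [ha hb]]. apply in_map_iff in hb as [b [<- hb]].
      apply in_or_app; right. apply in_flat_map. exists a; split; auto.
      apply in_map_iff. exists (gmul b y); split; [apply gmulA | apply IH; auto].
Qed.

Lemma almost_hom_one (G H : Grp) (K : list G) (phi : G -> H) :
  almost_hom K phi -> In gone K -> phi gone = gone.
Proof.
  intros [hm _] h1. apply (gmul_cancel_l (phi gone)).
  rewrite <- hm, !gmul1l, gmul1r; auto.
Qed.

Lemma almost_hom_inv (G H : Grp) (K : list G) (phi : G -> H) x :
  almost_hom K phi -> In gone K -> In x K -> In (ginv x) K -> phi (ginv x) = ginv (phi x).
Proof.
  intros hphi h1 hx hx'. apply gmul_eq1_ginv.
  rewrite <- (proj1 hphi) by auto. rewrite gmulVl. apply (almost_hom_one hphi h1).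
Qed.

Section Simulation.
Variables (V : Type) (E : V -> V -> Prop) (G G' : V -> Grp).
Variables (phi : forall v, G v -> G' v) (A : forall v, list (G v)) (N : nat).
Hypothesis hphi : forall v, almost_hom (ball (A v) N) (phi v).

Definition map_word (w : word G) : word G' :=
  map (fun a => existT (fun v => carrier (G' v)) (projT1 a) (phi (projT1 a) (projT2 a))) w.

Definition word_in_ball (m : nat) (w : word G) :=
  forall a, In a w -> In (projT2 a) (ball (A (projT1 a)) m).

Lemma word_in_ball_mono m m' w : m <= m' -> word_in_ball m w -> word_in_ball m' w.
Proof. intros h hw a ha. apply (ball_mono _ h), hw, ha. Qed.

Lemma word_in_ball_cons a w m : word_in_ball m (a :: w) -> word_in_ball m w.
Proof. intros h b hb. apply h; right; exact hb. Qed.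

Lemma word_in_ball_app m w1 w2 :
  word_in_ball m (w1 ++ w2) <-> word_in_ball m w1 /\ word_in_ball m w2.
Proof.
  split; [intro h; split; intros a ha; apply h, in_or_app; auto|].
  intros [h1 h2] a ha. apply in_app_or in ha as [ha|ha]; auto.
Qed.

Lemma map_word_app w1 w2 : map_word (w1 ++ w2) = map_word w1 ++ map_word w2.
Proof. apply map_app. Qed.

Lemma map_word_winv w : word_in_ball N (w ++ winv w) -> map_word (winv w) = winv (map_word w).
Proof.
  intro h. unfold map_word, winv. rewrite map_rev, !map_map. f_equal.
  apply map_ext_in. intros [v x] ha. unfold linv; simpl.
  rewrite (almost_hom_inv _ (hphi v)); auto using ball_one.
  - apply (h (existT _ v x)), in_or_app; left; exact ha.
  - apply (h (linv (existT _ v x))), in_or_app; right. apply in_winv, ha.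
Qed.

Lemma step_map_word m w w' : step E w w' -> word_in_ball m w -> 2 * m <= N ->
  step E (map_word w) (map_word w') /\ word_in_ball (2 * m) w' /\
  length w' <= length w /\ (length w' = length w -> word_in_ball m w').
Proof.
  intros hs; induction hs as [v l|v x y l|u v x y l huv|a l l' hs IH]; intros hw hm; simpl.
  - rewrite (almost_hom_one (hphi v)) by apply ball_one.
    split; [constructor|]. split; [|split; [lia | intro; lia]].
    apply (word_in_ball_mono (m := m)); [lia|]. exact (word_in_ball_cons hw).
  - assert (hx : In x (ball (A v) m)) by (apply (hw (existT _ v x)); simpl; auto).
    assert (hy : In y (ball (A v) m)) by (apply (hw (existT _ v y)); simpl; auto).
    assert (hN : incl (ball (A v) m) (ball (A v) N)) by (apply ball_mono; lia).
    split; [rewrite (proj1 (hphi v)); auto; constructor|].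
    split; [|split; [lia | intro; lia]].
    intros a [<-|ia]; simpl.
    + eapply ball_mono; [|apply ball_mul; [exact hx|exact hy]]; lia.
    + apply (ball_mono _ (m := m)); [lia|]. apply hw; simpl; auto.
  - split; [constructor; exact huv|]. split; [|split; [lia|]].
    + apply (word_in_ball_mono (m := m)); [lia|]. intros a ha. apply hw. simpl in *; tauto.
    + intros _ a ha. apply hw. simpl in *; tauto.
  - destruct (IH (word_in_ball_cons hw) hm) as [h1 [h2 [h3 h4]]].
    split; [constructor; exact h1|]. split; [|split; [lia|]].
    + intros b [<-|ib]; auto. apply (ball_mono _ (m := m)); [lia|]. apply hw; simpl; auto.
    + intros e b [<-|ib]; [apply hw; simpl; auto | apply h4; auto].
Qed.

(* Each merge shortens the word by one and at most doubles the radius of the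
   ball containing its letters. *)
Definition small_word (n : nat) (w : word G) :=
  length w <= n /\ word_in_ball (2 ^ (n - length w)) w.

Lemma small_word_step n w w' : 2 ^ S n <= N -> step E w w' -> small_word n w ->
  small_word n w' /\ step E (map_word w) (map_word w').
Proof.
  intros hN hs [hl hw].
  assert (hm : 2 * 2 ^ (n - length w) <= N).
  { eapply Nat.le_trans; [|apply hN]. rewrite Nat.pow_succ_r'. apply Nat.mul_le_mono_l.
    apply Nat.pow_le_mono_r; lia. }
  destruct (step_map_word hs hw hm) as [h1 [h2 [h3 h4]]].
  split; auto. split; [lia|].
  destruct (Nat.eq_dec (length w') (length w)) as [e|ne]; [rewrite e; auto|].
  apply (word_in_ball_mono (m := 2 * 2 ^ (n - length w))); auto.
  rewrite <- Nat.pow_succ_r'. apply Nat.pow_le_mono_r; lia.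
Qed.

Lemma red_map_word n w w' : 2 ^ S n <= N -> red E w w' -> small_word n w ->
  red E (map_word w) (map_word w').
Proof.
  intros hN hr. apply clos_rt_rt1n in hr. induction hr as [|x y z hs _ IH]; intro hx.
  - apply rt_refl.
  - destruct (small_word_step hN hs hx) as [hy hs'].
    eapply rt_trans; [apply rt_step, hs' | apply IH, hy].
Qed.

Lemma step_map_word_lift w z : step E (map_word w) z -> word_in_ball N w ->
  exists w', step E w w' /\ z = map_word w'.
Proof.
  intros hs. remember (map_word w) as mw eqn:emw. revert w emw.
  induction hs as [v l|v x y l|u v x y l huv|a l l' hs IH]; intros w0 emw hw.
  - destruct w0 as [|[u x] w0]; simpl in emw; try discriminate.
    injection emw as -> ex ->. apply inj_pair2 in ex.
    assert (x = gone) as ->.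
    { apply (proj2 (hphi u)); [apply (hw (existT _ u x)); simpl; auto | apply ball_one |].
      rewrite <- ex, (almost_hom_one (hphi u)) by apply ball_one. reflexivity. }
    exists w0. split; [constructor | reflexivity].
  - destruct w0 as [|[u1 x1] [|[u2 x2] w0]]; simpl in emw; try discriminate.
    injection emw; intros; subst.
    repeat match goal with h : existT _ _ _ = existT _ _ _ |- _ => apply inj_pair2 in h end.
    subst. exists (existT _ u1 (gmul x1 x2) :: w0). split; [constructor|].
    simpl. rewrite (proj1 (hphi u1)); auto.
    + apply (hw (existT _ u1 x1)); simpl; auto.
    + apply (hw (existT _ u1 x2)); simpl; auto.
  - destruct w0 as [|[u1 x1] [|[u2 x2] w0]]; simpl in emw; try discriminate.
    injection emw; intros; subst.
    repeat match goal with h : existT _ _ _ = existT _ _ _ |- _ => apply inj_pair2 in h end.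
    subst. exists (existT _ u2 x2 :: existT _ u1 x1 :: w0).
    split; [constructor; exact huv | reflexivity].
  - destruct w0 as [|b w0]; simpl in emw; try discriminate. injection emw as e1 e2.
    destruct (IH w0 e2 (word_in_ball_cons hw)) as [w' [h1 h2]].
    exists (b :: w'). split; [constructor; exact h1 | simpl; rewrite e1, h2; reflexivity].
Qed.

Lemma red_nil_map_word n w : 2 ^ S n <= N -> red E (map_word w) [] ->
  small_word n w -> red E w [].
Proof.
  intros hN hr. apply clos_rt_rt1n in hr. remember (map_word w) as mw eqn:e.
  remember [] as nil0 eqn:en. revert w e. induction hr as [|x y z hs _ IH]; intros w0 e hw.
  - subst. destruct w0; [apply rt_refl | discriminate].
  - subst x. assert (hwN : word_in_ball N w0).
    { apply (word_in_ball_mono (m := 2 ^ (n - length w0))), hw.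
      eapply Nat.le_trans; [|apply hN]. apply Nat.pow_le_mono_r; lia. }
    destruct (step_map_word_lift hs hwN) as [w' [h1 ->]].
    destruct (small_word_step hN h1 hw) as [hw' _].
    eapply rt_trans; [apply rt_step, h1 | apply IH; auto].
Qed.

End Simulation.

Arguments map_word {V G G'} phi w.
Arguments map_word_winv {V G G'} [phi A N].
Arguments red_map_word {V E G G'} [phi A N] hphi [n w w'].
Arguments red_nil_map_word {V E G G'} [phi A N] hphi [n w].

(** * Transfer to a graph product of the local images *)

Section Transfer.
Variables (V : Type) (E : V -> V -> Prop) (G G' : V -> Grp) (P : Grp)
  (iota : forall v, G v -> P).
Hypotheses (hE : simplicial E) (hP : is_graph_product E G P iota).
Variables (phi : forall v, G v -> G' v) (A : forall v, list (G v)) (n : nat).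
Hypothesis hphi : forall v, almost_hom (ball (A v) (2 ^ S n)) (phi v).

Definition transfer (w : word G) : graph_product_grp E G' :=
  eval (graph_product_inj E G') (map_word phi w).

Let inj_hom := proj1 (graph_product_grp_spec E G').
Let inj_comm := proj1 (proj2 (graph_product_grp_spec E G')).

Lemma transfer_app w1 w2 : transfer (w1 ++ w2) = gmul (transfer w1) (transfer w2).
Proof. unfold transfer. rewrite map_word_app. apply eval_app. Qed.

Lemma transfer_winv w : word_in_ball A 1 (w ++ winv w) -> transfer (winv w) = ginv (transfer w).
Proof.
  intro hw. unfold transfer. rewrite (map_word_winv hphi).
  - apply eval_winv, inj_hom.
  - apply (word_in_ball_mono (m := 1)), hw. apply Nat.neq_0_lt_0, Nat.pow_nonzero; lia.
Qed.

Lemma transfer_eq1 w : word_in_ball A 1 w -> length w <= n ->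
  eval iota w = gone <-> transfer w = gone.
Proof.
  intros hw hl.
  assert (hs : small_word A n w).
  { split; [exact hl|]. apply (word_in_ball_mono (m := 1)), hw.
    apply Nat.neq_0_lt_0, Nat.pow_nonzero; lia. }
  split; intro e.
  - apply (graph_product_word_problem hE hP) in e.
    apply (eval_red inj_hom inj_comm (red_map_word hphi (le_n _) e hs)).
  - apply (graph_product_word_problem hE (graph_product_grp_spec E G')) in e.
    apply (eval_red (proj1 hP) (proj1 (proj2 hP)) (red_nil_map_word hphi (le_n _) e hs)).
Qed.

Variables (wd : P -> word G) (K : list P).
Hypothesis wd_eval : forall p, eval iota (wd p) = p.
Hypothesis wd_small : forall p,
  (In p K \/ exists k1 k2, In k1 K /\ In k2 K /\ p = gmul k1 k2) ->
  word_in_ball A 1 (wd p ++ winv (wd p)) /\ 3 * length (wd p) <= n.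

Lemma transfer_almost_hom : almost_hom K (fun p => transfer (wd p)).
Proof.
  assert (hK : forall k, In k K ->
                 word_in_ball A 1 (wd k ++ winv (wd k)) /\ 3 * length (wd k) <= n)
    by (intros k hk; apply wd_small; left; exact hk).
  split.
  - intros k1 k2 h1 h2.
    destruct (hK k1 h1) as [b1 l1], (hK k2 h2) as [b2 l2].
    destruct (wd_small (p := gmul k1 k2)) as [b12 l12]; [right; exists k1, k2; auto|].
    apply word_in_ball_app in b1 as [b1 _], b2 as [b2 _], b12 as b12'.
    apply gmulV_eq1. rewrite <- transfer_winv, <- !transfer_app by exact b12.
    apply transfer_eq1.
    + apply word_in_ball_app; split; [apply b12'|]. apply word_in_ball_app; auto.
    + rewrite !length_app, length_winv. lia.
    + rewrite !eval_app, (eval_winv _ (proj1 hP)), !wd_eval. apply gmulVl.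
  - intros k1 k2 h1 h2 e. destruct (hK k1 h1) as [b1 l1], (hK k2 h2) as [b2 l2].
    rewrite <- (wd_eval k1), <- (wd_eval k2). apply gmulV_eq1.
    rewrite <- (eval_winv _ (proj1 hP)), <- eval_app. apply transfer_eq1.
    + destruct (proj1 (word_in_ball_app _ _ _ _) b1), (proj1 (word_in_ball_app _ _ _ _) b2).
      apply word_in_ball_app; auto.
    + rewrite length_app, length_winv. lia.
    + rewrite transfer_app, transfer_winv, e by exact b1. apply gmulVl.
Qed.

End Transfer.

Arguments transfer {V} E {G G'} phi w.

Section Letters.
Variables (V : Type) (G : V -> Grp).

Definition letters_at (v : V) (l : word G) : list (G v) :=
  flat_map (fun a => match dec (projT1 a = v) with
                     | left e => [eq_rect _ (fun z => carrier (G z)) (projT2 a) v e]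
                     | right _ => [] end) l.

Lemma letters_at_In v x l : In (existT _ v x) l -> In x (letters_at v l).
Proof.
  intro h. apply in_flat_map. exists (existT _ v x). split; auto. simpl.
  destruct (dec (v = v)) as [e|n]; [|congruence].
  rewrite (proof_irrelevance _ e eq_refl). left; reflexivity.
Qed.

End Letters.

Lemma length_le_flat_map (A B : Type) (f : A -> list B) (l : list A) a :
  In a l -> length (f a) <= length (flat_map f l).
Proof.
  induction l as [|b l IH]; simpl; [intros []|]. rewrite length_app.
  intros [<-|h]; [lia | specialize (IH h); lia].
Qed.

Proposition graph_product_local_transfer (D : GroupClass) (V : Type) (E : V -> V -> Prop)
    (G : V -> Grp) (P : Grp) (iota : forall v, G v -> P) :
  simplicial E -> is_graph_product E G P iota -> (forall v, LE D (G v)) ->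
  forall K : list P, exists G' : V -> Grp, (forall v, D (G' v)) /\
    exists psi : P -> graph_product_grp E G', almost_hom K psi.
Proof.
  intros hE hP hLE K.
  destruct (choice _ (graph_product_generated hP)) as [wd wd_eval].
  set (words := map wd K ++ flat_map (fun k1 => map (fun k2 => wd (gmul k1 k2)) K) K).
  set (letters := flat_map (fun w => w ++ winv w) words).
  set (n := 3 * length letters).
  set (A := fun v => letters_at v letters).
  assert (ch : forall v, {H : Grp & {f : G v -> H |
                 D H /\ almost_hom (ball (A v) (2 ^ S n)) f}}).
  { intro v.
    destruct (constructive_indefinite_description _ (hLE v (ball (A v) (2 ^ S n)))) as [H hH].
    exists H. apply constructive_indefinite_description, hH. }
  exists (fun v => projT1 (ch v)). split; [intro v; exact (proj1 (proj2_sig (projT2 (ch v))))|].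
  exists (fun p => transfer E (fun v => proj1_sig (projT2 (ch v))) (wd p)).
  apply (@transfer_almost_hom _ _ _ _ _ _ hE hP _ A n).
  - intro v; exact (proj2 (proj2_sig (projT2 (ch v)))).
  - exact wd_eval.
  - intros p hp. assert (hw : In (wd p) words).
    { apply in_or_app. destruct hp as [hp|[k1 [k2 [h1 [h2 ->]]]]]; [left; apply in_map, hp|].
      right. apply in_flat_map. exists k1; split; auto. apply in_map_iff; exists k2; auto. }
    split.
    + intros [v x] ha. apply ball_gen, letters_at_In, in_flat_map. exists (wd p); auto.
    + pose proof (length_le_flat_map (fun w => w ++ winv w) _ _ hw) as hl.
      simpl in hl. rewrite length_app in hl. unfold n. fold letters in hl. lia.
Qed.

Lemma finite_type_sig_In (A : Type) (l : list A) (Q : A -> Prop) :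
  finite_type {x | In x l /\ Q x}.
Proof.
  exists (flat_map (fun a => match dec (In a l /\ Q a) with
                             | left h => [exist _ a h] | right _ => [] end) l).
  intros [x hx]. apply in_flat_map. exists x. split; [exact (proj1 hx)|].
  destruct (dec _) as [h|n]; [left; apply sig_ext; reflexivity | contradiction].
Qed.

Lemma residually_of_mem (C : GroupClass) (H : Grp) : C H -> residually C H.
Proof.
  intros hC g hg. exists H, (fun x => x).
  split; [exact hC | split; [intros x y; reflexivity | split; [eauto | exact hg]]].
Qed.

Lemma residually_separates (C : GroupClass) (H : Grp) :
  closed_finite_products C -> residually C H -> forall Z : list H,
  exists (F : Grp) (pi : H -> F), C F /\ is_hom pi /\
    forall z, In z Z -> z <> gone -> pi z <> gone.
Proof.
  intros hprod hres Z.
  set (I := {z | In z Z /\ z <> gone}).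
  assert (sep : forall i : I, {F : Grp & {pi : H -> F |
                  C F /\ is_hom pi /\ pi (proj1_sig i) <> gone}}).
  { intros [z [hZ hz]]. destruct (constructive_indefinite_description _ (hres z hz)) as [F hF].
    exists F. destruct (constructive_indefinite_description _ hF) as [pi hpi].
    exists pi. tauto. }
  exists (prodGrp (fun i => projT1 (sep i))), (fun q i => proj1_sig (projT2 (sep i)) q).
  split; [|split].
  - apply hprod; [apply finite_type_sig_In|]. intro i. exact (proj1 (proj2_sig (projT2 (sep i)))).
  - intros x y. extensionality i. exact (proj1 (proj2 (proj2_sig (projT2 (sep i)))) x y).
  - intros z hz hz1 e. set (i := exist _ z (conj hz hz1) : I).
    exact (proj2 (proj2 (proj2_sig (projT2 (sep i)))) (f_equal (fun f => f i) e)).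
Qed.

Lemma LE_of_LE_residually (C : GroupClass) (G : Grp) :
  closed_finite_products C ->
  (forall K : list G, exists (H : Grp) (psi : G -> H), residually C H /\ almost_hom K psi) ->
  LE C G.
Proof.
  intros hprod hloc K. destruct (hloc K) as [H [psi [hres [psi_mul psi_inj]]]].
  destruct (residually_separates hprod hres
    (flat_map (fun k1 => map (fun k2 => gmul (ginv (psi k1)) (psi k2)) K) K))
    as [F [pi [hF [pi_hom pi_sep]]]].
  exists F, (fun g => pi (psi g)). split; [exact hF|]. split.
  - intros k1 k2 h1 h2. rewrite psi_mul by assumption. apply pi_hom.
  - intros k1 k2 h1 h2 e. apply psi_inj; auto. apply gmulV_eq1.
    apply NNPP. intro hz. apply (pi_sep (gmul (ginv (psi k1)) (psi k2))); [|exact hz|].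
    + apply in_flat_map. exists k1; split; auto. apply in_map_iff. exists k2; auto.
    + rewrite pi_hom, (hom_inv pi_hom), e. apply gmulVl.
Qed.

Theorem theoremB (C : GroupClass) :
  closed_subgroups C ->
  closed_finite_products C ->
  graph_products_preserve (residually C) ->
  graph_products_preserve (LE C).
Proof.
  intros _ hprod hres V E G P iota hE hP hLE.
  apply LE_of_LE_residually; [exact hprod|]. intro K.
  destruct (graph_product_local_transfer hE hP hLE K) as [G' [hG' [psi hpsi]]].
  exists (graph_product_grp E G'), psi. split; [|exact hpsi].
  apply (hres V E G' _ _ hE (graph_product_grp_spec E G')).
  intro v. apply residually_of_mem, hG'.
Qed.
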